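(* Let $X\neq\emptyset$ be a set and $\Phi$ a nonempty set of bounded functions $X\to\mathbb{R}$ that is compact with respect to $D_\Phi$. If the pseudo-metric space $(X,D_X)$ is complete, then $(X,D_X)$ is compact.
   Context: $D_\Phi(\varphi_1,\varphi_2):=\|\varphi_1-\varphi_2\|_\infty=\sup_{x\in X}|\varphi_1(x)-\varphi_2(x)|$. $D_X(x_1,x_2):=\sup_{\varphi\in\Phi}|\varphi(x_1)-\varphi(x_2)|$ (a pseudo-metric on $X$, finite since $\Phi$ is bounded); $X$ carries the topology induced by $D_X$. *)

From Stdlib Require Import Reals List ClassicalEpsilon.
Open Scope R_scope.

(* Supremum of a set of reals (chosen via classical choice; meaningful
   when the set is nonempty and bounded above, i.e. when a lub exists). *)
Definition Rsup (A : R -> Prop) : R :=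
  epsilon (inhabits 0) (fun l => is_lub A l).

Definition D_Phi {X : Type} (f g : X -> R) : R :=
  Rsup (fun r => exists x : X, r = Rabs (f x - g x)).

Definition D_X {X : Type} (Phi : (X -> R) -> Prop) (x1 x2 : X) : R :=
  Rsup (fun r => exists phi, Phi phi /\ r = Rabs (phi x1 - phi x2)).

Definition bounded_fun {X : Type} (f : X -> R) : Prop :=
  exists M : R, forall x, Rabs (f x) <= M.

(* S is compact as a (pseudo)metric subspace of (T,d): every cover of S by
   sets open in the subspace topology of S admits a finite subcover. *)
Definition compact_in {T : Type} (d : T -> T -> R) (S : T -> Prop) : Prop :=
  forall (I : Type) (U : I -> T -> Prop),
    (forall i x, S x -> U i x ->
       exists eps, 0 < eps /\ forall y, S y -> d x y < eps -> U i y) ->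
    (forall x, S x -> exists i, U i x) ->
    exists l : list I, forall x, S x -> exists i, In i l /\ U i x.

Definition compact_space {T : Type} (d : T -> T -> R) : Prop :=
  compact_in d (fun _ => True).

Definition complete_space {T : Type} (d : T -> T -> R) : Prop :=
  forall u : nat -> T,
    (forall eps, 0 < eps -> exists N : nat, forall n m : nat,
        (N <= n)%nat -> (N <= m)%nat -> d (u n) (u m) < eps) ->
    exists l : T, forall eps, 0 < eps -> exists N : nat, forall n : nat,
        (N <= n)%nat -> d (u n) l < eps.

From Stdlib Require Import Reals List ClassicalEpsilon.
From Stdlib Require Import Lra Lia Classical.
Open Scope R_scope.

(* A complete pseudo-metric space is compact as soon as it is totally
   bounded, so it suffices to show that (X, D_X) is totally bounded.
   1. Suprema: D_Phi and D_X are suprema of bounded sets of reals, so they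
      satisfy the usual "upper bound / least upper bound" characterisation.
   2. Compactness of Phi gives, for every r > 0, a finite r-net of Phi for
      D_Phi; the 1-net shows that Phi is uniformly bounded, which makes D_X
      a genuine (finite) pseudo-metric.
   3. Finitely many bounded functions f_1, ..., f_k can be approximated to
      within r on X by finitely many points (slice X into strips on which
      each f_j varies by less than r).  Applied to an eps/4-net of Phi this
      yields an eps-net of (X, D_X): D_X is totally bounded.
   4. The general fact "complete + totally bounded => compact" is proved by
      the classical bisection argument: an open cover without finite
      subcover yields nested non-finitely-covered sets of radius -> 0, whose
      points form a Cauchy sequence; its limit lies in some member of the
      cover, which then covers one of the nested sets, a contradiction. *)

Ltac rabs :=
  repeat match goal with
  | |- context [Rabs ?a] =>
      let h := fresh in destruct (Rcase_abs a) as [h|h];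
      [rewrite (Rabs_left a h) in * | rewrite (Rabs_right a h) in *]
  | H : context [Rabs ?a] |- _ =>
      let h := fresh in destruct (Rcase_abs a) as [h|h];
      [rewrite (Rabs_left a h) in * | rewrite (Rabs_right a h) in *]
  end; lra.

Lemma Rsup_lub (A : R -> Prop) : (exists x, A x) -> bound A -> is_lub A (Rsup A).
Proof.
  intros [x Hx] HA. unfold Rsup. apply epsilon_spec.
  destruct (completeness A HA (ex_intro _ x Hx)) as [l Hl]. exists l; exact Hl.
Qed.

Lemma Rsup_upper (A : R -> Prop) (M r : R) :
  is_upper_bound A M -> A r -> r <= Rsup A.
Proof.
  intros HM Hr. apply (Rsup_lub A); [exists r; exact Hr | exists M; exact HM | exact Hr].
Qed.

Lemma Rsup_least (A : R -> Prop) (b : R) :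
  (exists x, A x) -> is_upper_bound A b -> Rsup A <= b.
Proof. intros Hne Hb. apply (Rsup_lub A Hne); [exists b; exact Hb | exact Hb]. Qed.

Definition totally_bounded {T : Type} (d : T -> T -> R) : Prop :=
  forall eps, 0 < eps -> exists L : list T, forall x, exists c, In c L /\ d c x < eps.

Definition finitely_covered {T I : Type} (U : I -> T -> Prop) (A : T -> Prop) : Prop :=
  exists l : list I, forall x, A x -> exists i, In i l /\ U i x.

Section FiniteCovers.
Variables (T I : Type) (U : I -> T -> Prop).

Lemma uncovered_nonempty (A : T -> Prop) : ~ finitely_covered U A -> exists x, A x.
Proof.
  intros HA. apply NNPP. intros Hn. apply HA. exists nil.
  intros x Hx. exfalso. apply Hn. exists x. exact Hx.
Qed.

Lemma uncovered_piece (B : T -> T -> Prop) (L : list T) (A : T -> Prop) :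
  ~ finitely_covered U A -> (forall x, A x -> exists c, In c L /\ B c x) ->
  exists c, ~ finitely_covered U (fun x => A x /\ B c x).
Proof.
  revert A. induction L as [|c L IH]; intros A HA HL.
  - destruct (uncovered_nonempty A HA) as [x Hx]. destruct (HL x Hx) as [c [[] _]].
  - destruct (classic (finitely_covered U (fun x => A x /\ B c x))) as [[l1 Hl1]|Hc];
      [|exists c; exact Hc].
    destruct (IH (fun x => A x /\ ~ B c x)) as [c' Hc'].
    + intros [l2 Hl2]. apply HA. exists (l1 ++ l2). intros x Hx.
      destruct (classic (B c x)) as [h|h].
      * destruct (Hl1 x (conj Hx h)) as [i [Hi Hu]].
        exists i. split; [apply in_or_app; left; exact Hi | exact Hu].
      * destruct (Hl2 x (conj Hx h)) as [i [Hi Hu]].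
        exists i. split; [apply in_or_app; right; exact Hi | exact Hu].
    + intros x [Hx Hn]. destruct (HL x Hx) as [c0 [[<-|Hc0] Hd]]; [contradiction|].
      exists c0. split; assumption.
    + exists c'. intros [l Hl]. apply Hc'. exists l.
      intros x [[Hx _] Hd]. apply Hl. split; assumption.
Qed.

End FiniteCovers.

Definition radius (n : nat) : R := / INR (S n).

Lemma radius_pos (n : nat) : 0 < radius n.
Proof. apply Rinv_0_lt_compat, lt_0_INR. lia. Qed.

Lemma radius_small (eps : R) : 0 < eps -> exists N, radius N < eps.
Proof.
  intros he. destruct (archimed_cor1 eps he) as [N [HN HN0]]. exists N.
  eapply Rle_lt_trans; [|exact HN]. apply Rinv_le_contravar.
  - apply lt_0_INR. exact HN0.
  - apply le_INR. lia.
Qed.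

Section CompleteTotallyBounded.
Variables (T : Type) (d : T -> T -> R).
Hypothesis d_triangle : forall x y z, d x z <= d x y + d y z.
Hypothesis d_sym : forall x y, d y x <= d x y.
Hypothesis d_totally_bounded : totally_bounded d.

Lemma nested_uncovered (I : Type) (U : I -> T -> Prop) :
  ~ finitely_covered U (fun _ => True) ->
  exists (A : nat -> T -> Prop) (c : nat -> T),
    (forall n, ~ finitely_covered U (A n)) /\
    (forall n x, A (S n) x -> A n x /\ d (c n) x < radius n).
Proof.
  intros Hall. destruct (uncovered_nonempty T I U _ Hall) as [x0 _].
  assert (step : forall p : nat * (T -> Prop), exists c : T,
    ~ finitely_covered U (snd p) ->
    ~ finitely_covered U (fun x => snd p x /\ d c x < radius (fst p))).
  { intros [n B]. simpl. destruct (classic (finitely_covered U B)) as [Hc|Hu].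
    - exists x0. intros Hn. contradiction.
    - destruct (d_totally_bounded (radius n) (radius_pos n)) as [L HL].
      destruct (uncovered_piece T I U (fun c x => d c x < radius n) L B Hu)
        as [c Hc]; [intros x _; apply HL|].
      exists c. intros _. exact Hc. }
  destruct (choice _ step) as [next Hnext].
  set (A := fix A (n : nat) : T -> Prop := match n with
     | O => fun _ => True
     | S n => fun x => A n x /\ d (next (n, A n)) x < radius n end).
  exists A, (fun n => next (n, A n)). split.
  - intros n. induction n as [|n IH]; [exact Hall|]. exact (Hnext (n, A n) IH).
  - intros n x Hx. exact Hx.
Qed.

Theorem complete_totally_bounded_compact : complete_space d -> compact_space d.
Proof.
  intros Hcomplete Idx U Hopen Hcov. apply NNPP. intros Hall.
  destruct (nested_uncovered Idx U Hall) as [A [c [Hunc Hnest]]].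
  assert (Amono : forall n m x, (n <= m)%nat -> A m x -> A n x).
  { intros n m x Hnm. induction Hnm as [|m _ IH]; [auto|].
    intros Hx. apply IH, (Hnest m x Hx). }
  assert (small : forall N y z, A (S N) y -> A (S N) z -> d y z < 2 * radius N).
  { intros N y z Hy Hz. apply Hnest in Hy as [_ Hy]. apply Hnest in Hz as [_ Hz].
    pose proof (d_triangle y (c N) z). pose proof (d_sym (c N) y). lra. }
  destruct (choice (fun n x => A (S n) x))
    as [u Hu]; [intros n; exact (uncovered_nonempty T Idx U _ (Hunc (S n)))|].
  destruct (Hcomplete u) as [l Hl].
  { intros eps he. destruct (radius_small (eps / 2) ltac:(lra)) as [N HN]. exists N.
    intros n m Hn Hm.
    pose proof (small N (u n) (u m) (Amono (S N) (S n) _ ltac:(lia) (Hu n))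
                                    (Amono (S N) (S m) _ ltac:(lia) (Hu m))). lra. }
  destruct (Hcov l I) as [i Hi].
  destruct (Hopen i l I Hi) as [e0 [He0 Hball]].
  destruct (radius_small (e0 / 4) ltac:(lra)) as [N HN].
  destruct (Hl (e0 / 4) ltac:(lra)) as [K HK].
  (* The single set U i covers A (N+1), which lies within e0 of the limit. *)
  apply (Hunc (S N)). exists (i :: nil). intros y Hy.
  exists i. split; [left; reflexivity|]. apply Hball; [exact I|].
  pose proof (HK (Nat.max N K) ltac:(lia)).
  pose proof (small N _ y (Amono (S N) (S (Nat.max N K)) _ ltac:(lia) (Hu _)) Hy).
  pose proof (d_triangle l (u (Nat.max N K)) y). pose proof (d_sym (u (Nat.max N K)) l).
  lra.
Qed.

End CompleteTotallyBounded.

Lemma compact_finite_net {T : Type} (d : T -> T -> R) (S : T -> Prop) :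
  compact_in d S ->
  (forall x y z, S x -> S y -> S z -> d x z <= d x y + d y z) ->
  (forall x, S x -> d x x <= 0) ->
  forall r, 0 < r -> exists l : list T,
    (forall f, In f l -> S f) /\ forall g, S g -> exists f, In f l /\ d f g < r.
Proof.
  intros Hcpt Htri Hrefl r hr.
  destruct (Hcpt (sig S) (fun i g => d (proj1_sig i) g < r)) as [l Hl].
  - intros [f Hf] g Hg Hfg. simpl in Hfg. exists (r - d f g). split; [lra|].
    intros y Hy Hgy. simpl. pose proof (Htri f g y Hf Hg Hy). lra.
  - intros g Hg. exists (exist _ g Hg). simpl. pose proof (Hrefl g Hg). lra.
  - exists (map (@proj1_sig _ _) l). split.
    + intros f Hf. apply in_map_iff in Hf. destruct Hf as [[f' Hf'] [<- _]]. exact Hf'.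
    + intros g Hg. destruct (Hl g Hg) as [[f Hf] [Hi Hu]]. exists f. split; [|exact Hu].
      apply in_map_iff. exists (exist _ f Hf). split; [reflexivity | exact Hi].
Qed.

Section BoundedFunctions.
Variable X : Type.

Lemma D_Phi_ge (f g : X -> R) (x : X) :
  bounded_fun f -> bounded_fun g -> Rabs (f x - g x) <= D_Phi f g.
Proof.
  intros [Mf Hf] [Mg Hg]. apply (Rsup_upper _ (Mf + Mg)); [|exists x; reflexivity].
  intros r [y ->]. specialize (Hf y). specialize (Hg y). rabs.
Qed.

Lemma D_Phi_le (f g : X -> R) (b : R) :
  inhabited X -> (forall x, Rabs (f x - g x) <= b) -> D_Phi f g <= b.
Proof.
  intros [x0] H. apply Rsup_least; [exists (Rabs (f x0 - g x0)), x0; reflexivity|].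
  intros r [x ->]. apply H.
Qed.

Lemma D_Phi_triangle (f g h : X -> R) : inhabited X ->
  bounded_fun f -> bounded_fun g -> bounded_fun h -> D_Phi f h <= D_Phi f g + D_Phi g h.
Proof.
  intros hX bf bg bh. apply D_Phi_le; [exact hX|]. intros x.
  pose proof (D_Phi_ge f g x bf bg). pose proof (D_Phi_ge g h x bg bh). rabs.
Qed.

Lemma D_Phi_refl (f : X -> R) : inhabited X -> D_Phi f f <= 0.
Proof.
  intros hX. apply D_Phi_le; [exact hX|]. intros x.
  replace (f x - f x) with 0 by ring. rewrite Rabs_R0. lra.
Qed.

Lemma list_bound (l : list (X -> R)) : (forall f, In f l -> bounded_fun f) ->
  exists M, forall f, In f l -> forall x, Rabs (f x) <= M.
Proof.
  induction l as [|f l IH]; intros Hb.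
  - exists 0. intros f [].
  - destruct (Hb f (or_introl eq_refl)) as [Mf Hf].
    destruct IH as [Ml Hl]; [intros g Hg; apply Hb; right; exact Hg|].
    exists (Rmax Mf Ml). intros g [<-|Hg] x.
    + eapply Rle_trans; [apply Hf | apply Rmax_l].
    + eapply Rle_trans; [apply (Hl g Hg) | apply Rmax_r].
Qed.

Definition fin_net (fs : list (X -> R)) (r : R) (S : X -> Prop) : Prop :=
  exists L, (forall c, In c L -> S c) /\
    forall x, S x -> exists c, In c L /\ forall f, In f fs -> Rabs (f x - f c) < r.

Lemma fin_net_nil (r : R) (S : X -> Prop) : fin_net nil r S.
Proof.
  destruct (classic (exists x, S x)) as [[x Hx]|Hn].
  - exists (x :: nil). split; [intros c [<-|[]]; exact Hx|].
    intros y _. exists x. split; [left; reflexivity | intros f []].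
  - exists nil. split; [intros c []|]. intros x Hx. exfalso. apply Hn. exists x. exact Hx.
Qed.

(* Adding f to fs: a set on which f ranges over n strips of width r is
   the union of n pieces on each of which f varies by less than r. *)
Lemma fin_net_strips (f : X -> R) (fs : list (X -> R)) (r : R) :
  (forall S, fin_net fs r S) ->
  forall n a (S : X -> Prop), (forall x, S x -> a <= f x < a + INR n * r) ->
  fin_net (f :: fs) r S.
Proof.
  intros Hfs n. induction n as [|n IHn]; intros a S HS.
  - exists nil. split; [intros c []|]. intros x Hx. specialize (HS x Hx). simpl in HS. lra.
  - destruct (Hfs (fun x => S x /\ f x < a + r)) as [L1 [H1a H1b]].
    destruct (IHn (a + r) (fun x => S x /\ a + r <= f x)) as [L2 [H2a H2b]].
    { intros x [Hx Hx']. specialize (HS x Hx). rewrite S_INR in HS. lra. }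
    exists (L1 ++ L2). split.
    + intros c Hc. apply in_app_or in Hc as [Hc|Hc]; [apply H1a | apply H2a]; exact Hc.
    + intros x Hx. destruct (Rlt_le_dec (f x) (a + r)) as [Hlt|Hge].
      * destruct (H1b x (conj Hx Hlt)) as [c [Hc Hc']]. exists c.
        split; [apply in_or_app; left; exact Hc|].
        intros g [<-|Hg]; [|apply Hc'; exact Hg].
        destruct (H1a c Hc) as [Sc Fc]. pose proof (HS c Sc). pose proof (HS x Hx). rabs.
      * destruct (H2b x (conj Hx Hge)) as [c [Hc Hc']]. exists c.
        split; [apply in_or_app; right; exact Hc | exact Hc'].
Qed.

Lemma fin_net_bounded (fs : list (X -> R)) (r : R) :
  0 < r -> (forall f, In f fs -> bounded_fun f) -> forall S, fin_net fs r S.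
Proof.
  intros hr. induction fs as [|f fs IH]; intros Hb S; [apply fin_net_nil|].
  assert (Hfs : forall S, fin_net fs r S) by (apply IH; intros g Hg; apply Hb; right; exact Hg).
  destruct (Hb f (or_introl eq_refl)) as [M HM].
  destruct (INR_unbounded ((2 * Rabs M + 1) / r)) as [n Hn].
  apply (fin_net_strips f fs r Hfs n (- Rabs M - 1)). intros x _. specialize (HM x).
  assert (INR n * r > 2 * Rabs M + 1).
  { replace (2 * Rabs M + 1) with ((2 * Rabs M + 1) / r * r) by (field; lra).
    apply Rmult_lt_compat_r; lra. }
  rabs.
Qed.

End BoundedFunctions.

Section DX_Pseudometric.
Variables (X : Type) (Phi : (X -> R) -> Prop).
Hypothesis hX : inhabited X.
Hypothesis hPhi_ne : exists phi, Phi phi.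
Hypothesis hPhi_bdd : forall phi, Phi phi -> bounded_fun phi.
Hypothesis hPhi_cpt : compact_in (@D_Phi X) Phi.

Lemma Phi_finite_net (r : R) : 0 < r -> exists l : list (X -> R),
  (forall f, In f l -> Phi f) /\ forall g, Phi g -> exists f, In f l /\ D_Phi f g < r.
Proof.
  apply compact_finite_net; [exact hPhi_cpt| |].
  - intros f g h Hf Hg Hh. apply D_Phi_triangle; auto.
  - intros f _. apply D_Phi_refl, hX.
Qed.

Lemma Phi_uniformly_bounded : exists M, forall phi, Phi phi -> forall x, Rabs (phi x) <= M.
Proof.
  destruct (Phi_finite_net 1 ltac:(lra)) as [l [Hl Hnet]].
  destruct (list_bound X l) as [M HM]; [intros f Hf; apply hPhi_bdd, Hl, Hf|].
  exists (M + 1). intros g Hg x. destruct (Hnet g Hg) as [f [Hf Hd]].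
  pose proof (D_Phi_ge X f g x (hPhi_bdd f (Hl f Hf)) (hPhi_bdd g Hg)).
  pose proof (HM f Hf x). rabs.
Qed.

Lemma D_X_ge (x y : X) (phi : X -> R) : Phi phi -> Rabs (phi x - phi y) <= D_X Phi x y.
Proof.
  intros Hphi. destruct Phi_uniformly_bounded as [M HM].
  apply (Rsup_upper _ (2 * M)); [|exists phi; split; [exact Hphi | reflexivity]].
  intros r [p [Hp ->]]. pose proof (HM p Hp x). pose proof (HM p Hp y). rabs.
Qed.

Lemma D_X_le (x y : X) (b : R) :
  (forall phi, Phi phi -> Rabs (phi x - phi y) <= b) -> D_X Phi x y <= b.
Proof.
  intros H. destruct hPhi_ne as [p Hp]. apply Rsup_least.
  - exists (Rabs (p x - p y)), p. split; [exact Hp | reflexivity].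
  - intros r [q [Hq ->]]. apply H, Hq.
Qed.

Lemma D_X_triangle (x y z : X) : D_X Phi x z <= D_X Phi x y + D_X Phi y z.
Proof.
  apply D_X_le. intros p Hp.
  pose proof (D_X_ge x y p Hp). pose proof (D_X_ge y z p Hp). rabs.
Qed.

Lemma D_X_sym (x y : X) : D_X Phi y x <= D_X Phi x y.
Proof. apply D_X_le. intros p Hp. pose proof (D_X_ge x y p Hp). rabs. Qed.

(* An eps/4-net of Phi and points approximating its members to eps/4
   give an eps-net of (X, D_X). *)
Lemma D_X_totally_bounded : totally_bounded (D_X Phi).
Proof.
  intros eps he. destruct (Phi_finite_net (eps / 4) ltac:(lra)) as [fs [Hfs Hnet]].
  destruct (fin_net_bounded X fs (eps / 4) ltac:(lra)
              (fun f Hf => hPhi_bdd f (Hfs f Hf)) (fun _ => True)) as [L [_ HL]].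
  exists L. intros x. destruct (HL x I) as [c [Hc Hc']]. exists c. split; [exact Hc|].
  enough (D_X Phi c x <= 3 * eps / 4) by lra.
  apply D_X_le. intros p Hp. destruct (Hnet p Hp) as [f [Hf Hfp]].
  pose proof (D_Phi_ge X f p c (hPhi_bdd f (Hfs f Hf)) (hPhi_bdd p Hp)).
  pose proof (D_Phi_ge X f p x (hPhi_bdd f (Hfs f Hf)) (hPhi_bdd p Hp)).
  pose proof (Hc' f Hf). rabs.
Qed.

End DX_Pseudometric.

Theorem mainTheorem3 (X : Type) (Phi : (X -> R) -> Prop)
  (hX : inhabited X)
  (hPhi_ne : exists phi, Phi phi)
  (hPhi_bdd : forall phi, Phi phi -> bounded_fun phi)
  (hPhi_cpt : compact_in (@D_Phi X) Phi)
  (hcomplete : complete_space (D_X Phi)) :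
  compact_space (D_X Phi).
Proof.
  apply complete_totally_bounded_compact; [| | | exact hcomplete].
  - intros x y z. exact (D_X_triangle X Phi hX hPhi_ne hPhi_bdd hPhi_cpt x y z).
  - intros x y. exact (D_X_sym X Phi hX hPhi_ne hPhi_bdd hPhi_cpt x y).
  - exact (D_X_totally_bounded X Phi hX hPhi_ne hPhi_bdd hPhi_cpt).
Qed.
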